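(* For all integers $m\ge2$ and $p\ge1$, $$E\,|C_m(p;\mathbf U_1)-C_m(p-1;\mathbf U_1)|\le 2+16m.$$
   Context: Let $U_1,U_2,\ldots$ be i.i.d. uniform random variables on $[0,1]$ and $\mathbf U_k=(U_k,U_{k+1},\ldots)$ for $k\ge1$. For integers $m\ge1$, $n\ge0$, $k\ge1$, define $C_m(n;\mathbf U_k)$ recursively (in $n$) by $C_m(n;\mathbf U_k)=0$ for $0\le n\le m-1$, and for $n\ge m$, writing $V=\lfloor nU_k\rfloor$, $$C_m(n;\mathbf U_k)=n-1+C_m(V;\mathbf U_{k+1})+C_{m-1-V}(n-1-V;\mathbf U_{k+1})\,\mathbf 1(V<m-1).$$ (This is the number of comparisons made by Quickselect to find the $m$-th smallest of $n$ distinct numbers.) *)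

From HB Require Import structures.
From mathcomp Require Import all_boot all_order all_algebra.
From mathcomp Require Import all_classical all_reals all_analysis.
Set Implicit Arguments. Unset Strict Implicit. Unset Printing Implicit Defensive.
Import Order.TTheory GRing.Theory Num.Theory.
Local Open Scope classical_set_scope.
Local Open Scope ring_scope.

Definition mutually_independent {d} {T : measurableType d} {R : realType}
  (P : probability T R) (U : nat -> {RV P >-> R}) : Prop :=
  forall (I : seq nat), uniq I ->
  forall (B : nat -> set R), (forall i, measurable (B i)) ->
  P (\bigcap_(i in [set` I]) (U i @^-1` B i)) =
  (\prod_(i <- I) P (U i @^-1` B i))%E.

Definition uniform01 {d} {T : measurableType d} {R : realType}
  (P : probability T R) (X : {RV P >-> R}) : Prop :=
  forall A : set R, measurable A ->
  distribution P X A = uniform_prob (@ltr01 R) A.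

(* Quickselect comparison count, computed from a realization u of the
   sequence (u k = U_{k+1}, i.e. 0-based indexing), with fuel. *)
Fixpoint Cfuel {R : realType} (fuel m n : nat) (u : nat -> R) (k : nat) : R :=
  match fuel with
  | 0 => 0
  | f.+1 =>
    if (n < m)%N then 0 else
    let V := minn (Num.truncn (n%:R * u k)) n.-1 in
    (n%:R - 1) + Cfuel f m V u k.+1
      + (if (V < m.-1)%N then Cfuel f (m.-1 - V) (n.-1 - V) u k.+1 else 0)
  end.

(* C_m(n; U_{k+1}) (0-based k); fuel n.+1 suffices since n strictly decreases. *)
Definition Cqs {R : realType} (m n : nat) (u : nat -> R) (k : nat) : R :=
  Cfuel n.+1 m n u k.

(* Drive the runs of Quickselect on p and p - 1 keys by the same uniforms.  Their first
   pivots have ranks V = floor(p U_1) and V' = floor((p - 1) U_1), and V' is V or V - 1.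
   Unfolding one partitioning step in both runs bounds |C_m(p) - C_m(p - 1)| by 1 plus
   either a difference of the same kind for fewer keys, or at most two comparison counts
   for fewer keys, whose means are at most 4 times their size (the classical bound,
   proved by the same one-step recursion).  These terms only depend on U_2, U_3, ...,
   which are independent of U_1, so strong induction on p bounds their means given U_1,
   and averaging over the explicit law of (V, V' = V) gives 2 + 16 m. *)

From HB Require Import structures.
From mathcomp Require Import all_boot all_order all_algebra.
From mathcomp Require Import all_classical all_reals all_analysis.
From mathcomp Require Import ring lra zify.

Set Implicit Arguments. Unset Strict Implicit. Unset Printing Implicit Defensive.
Import Order.TTheory GRing.Theory Num.Theory.
Local Open Scope classical_set_scope.
Local Open Scope ring_scope.

Lemma natr_pred (R : pzRingType) n : (0 < n)%N -> (n.-1%:R : R) = n%:R - 1.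
Proof. by move=> n0; rewrite -subn1 natrB. Qed.

Section Quickselect.
Variable R : realType.
Implicit Types (u : nat -> R) (x : R).

(* The rank [V] of the first pivot; the [minn] only matters when [x >= 1]. *)
Definition pivot n x : nat := minn (Num.truncn (n%:R * x)) n.-1.

Lemma pivot_le n x : (pivot n x <= n.-1)%N.
Proof. exact: geq_minr. Qed.

Lemma pivot_lt n x : (0 < n)%N -> (pivot n x < n)%N.
Proof. by move=> n0; rewrite (leq_ltn_trans (pivot_le n x)) // prednK. Qed.

Lemma leq_pivot n x t : (t <= n.-1)%N ->
  (t <= pivot n x)%N = (t == 0%N) || (t%:R <= n%:R * x).
Proof.
by move=> tn; rewrite leq_min tn andbT; case: t tn => //= t _; rewrite truncn_gt_nat.
Qed.

Lemma pivot_leq n x t : (t < n.-1)%N -> (pivot n x <= t)%N = (n%:R * x < t.+1%:R).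
Proof. by move=> tn; rewrite geq_min truncn_le_nat leqNgt tn orbF. Qed.

Lemma CfuelE u f m n k : Cfuel f.+1 m n u k =
  if (n < m)%N then 0 else
    (n%:R - 1) + Cfuel f m (pivot n (u k)) u k.+1
    + (if (pivot n (u k) < m.-1)%N
       then Cfuel f (m.-1 - pivot n (u k)) (n.-1 - pivot n (u k)) u k.+1 else 0).
Proof. by []. Qed.

Lemma Cfuel_enough u f m n k : (0 < m)%N -> (n < f)%N -> Cfuel f m n u k = Cqs m n u k.
Proof.
elim/ltn_ind: f m n k => -[//|f] IH m n k m0 nf.
rewrite /Cqs !CfuelE; case: ltnP => // mn.
have n0 := leq_trans m0 mn.
have Vn := pivot_lt (u k) n0.
have Vf : (pivot n (u k) < f)%N by apply: leq_trans Vn _.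
rewrite (IH f) // (IH n) //; case: ifP => // Vm.
have m'0 : (0 < m.-1 - pivot n (u k))%N by rewrite subn_gt0.
have n'f : (n.-1 - pivot n (u k) < n)%N.
  by apply: leq_ltn_trans (leq_subr _ _) _; rewrite prednK.
by rewrite (IH f) ?(leq_trans n'f) // (IH n).
Qed.

Lemma Cqs_lt m n u k : (n < m)%N -> Cqs m n u k = 0.
Proof. by move=> nm; rewrite /Cqs CfuelE nm. Qed.

Lemma CqsE m n u k : (0 < m)%N -> (m <= n)%N ->
  Cqs m n u k = (n%:R - 1) + Cqs m (pivot n (u k)) u k.+1
    + (if (pivot n (u k) < m.-1)%N
       then Cqs (m.-1 - pivot n (u k)) (n.-1 - pivot n (u k)) u k.+1 else 0).
Proof.
move=> m0 mn; have n0 := leq_trans m0 mn.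
have Vn := pivot_lt (u k) n0.
rewrite [LHS]/Cqs CfuelE ltnNge mn /= Cfuel_enough //; case: ifP => // Vm.
by rewrite Cfuel_enough ?subn_gt0 // (leq_ltn_trans (leq_subr _ _)) // prednK.
Qed.

Lemma Cqs_ge0 m n u k : (0 < m)%N -> 0 <= Cqs m n u k.
Proof.
elim/ltn_ind: n m k => n IH m k m0.
have [nm|mn] := ltnP n m; first by rewrite Cqs_lt.
have n0 := leq_trans m0 mn.
have Vn := pivot_lt (u k) n0.
rewrite CqsE //; apply: addr_ge0; first apply: addr_ge0.
- by rewrite subr_ge0 ler1n.
- exact: IH.
case: ifP => // Vm; apply: IH; last by rewrite subn_gt0.
by rewrite (leq_ltn_trans (leq_subr _ _)) // prednK.
Qed.

End Quickselect.

Section PivotAverages.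
Variable R : realFieldType.

Definition sum_pow0 (A B : R) := B - A.
Definition sum_pow1 (A B : R) := (B * (B - 1) - A * (A - 1)) / 2.
Definition sum_pow2 (A B : R) :=
  ((B - 1) * B * (2 * B - 1) - (A - 1) * A * (2 * A - 1)) / 6.

Lemma sum_quadratic (a b : nat) (c0 c1 c2 : R) (F : nat -> R) : (a <= b)%N ->
  (forall v, (a <= v < b)%N -> F v = c0 + c1 * v%:R + c2 * v%:R ^+ 2) ->
  \sum_(a <= v < b) F v =
  c0 * sum_pow0 a%:R b%:R + c1 * sum_pow1 a%:R b%:R + c2 * sum_pow2 a%:R b%:R.
Proof.
rewrite /sum_pow0 /sum_pow1 /sum_pow2.
elim: b => [|b IH] ab HF.
  by move: ab; rewrite leqn0 => /eqP->; rewrite big_geq //; field.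
have [ab'|ba] := leqP a b; last first.
  have -> : a = b.+1 by apply/eqP; rewrite eqn_leq ab.
  by rewrite big_geq //; field.
rewrite big_nat_recr //= IH //; last by move=> v /andP [av vb]; rewrite HF // av ltnW.
rewrite HF; last by rewrite ab' ltnSn.
by rewrite -addn1 natrD; field.
Qed.

(* Bound on the conditional mean of [C_m(n)] given that the first pivot has rank [v],
   from the bound [4 n'] on the mean of [C_m'(n')] for [n' < n]. *)
Definition pivot_cost_bound (n m v : nat) : R := (n%:R - 1)
  + (if (m <= v)%N then 4 * v%:R else 0)
  + (if (v < m.-1)%N then 4 * (n%:R - 1 - v%:R) else 0).

Lemma mean_pivot_cost_le n m : (0 < m)%N -> (m <= n)%N ->
  \sum_(0 <= v < n) (n%:R : R)^-1 * pivot_cost_bound n m v <= 4 * n%:R.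
Proof.
move=> m0 mn; have n0 : (0 : R) < n%:R by rewrite ltr0n (leq_trans m0).
rewrite -mulr_sumr (ler_pdivrMl _ _ n0).
have [m'm m'n] : (m.-1 <= m)%N /\ (m.-1 <= n)%N by split; lia.
rewrite (big_cat_nat (leq0n m.-1) m'n) (big_cat_nat m'm mn) /=.
rewrite (@sum_quadratic _ _ (5 * (n%:R - 1)) (-4) 0) //; last first.
  move=> v /andP [_ vm]; rewrite /pivot_cost_bound vm.
  have -> : (m <= v)%N = false by lia.
  by ring.
rewrite (@sum_quadratic _ _ (n%:R - 1) 0 0) //; last first.
  move=> v /andP [v1 vm]; rewrite /pivot_cost_bound.
  have -> : (m <= v)%N = false by lia.
  have -> : (v < m.-1)%N = false by lia.
  by ring.
rewrite (@sum_quadratic _ _ (n%:R - 1) 4 0) //; last first.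
  move=> v /andP [mv _]; rewrite /pivot_cost_bound mv.
  have -> : (v < m.-1)%N = false by lia.
  by ring.
rewrite /sum_pow0 /sum_pow1 /sum_pow2 natr_pred //.
have : (m%:R : R) <= n%:R by rewrite ler_nat.
have : (1 : R) <= m%:R by rewrite ler1n.
have : 0 <= (n%:R - 2 * m%:R) ^+ 2 :> R by rewrite sqr_ge0.
nra.
Qed.

Definition pivot_pairs (n : nat) : seq (nat * bool) :=
  [seq (v, e) | v <- index_iota 0 n, e <- [:: true; false]].

(* The law of [(pivot n x, pivot n.-1 x == pivot n x)] for [x] uniform on [0, 1]. *)
Definition pair_prob (n : nat) (i : nat * bool) : R :=
  (if i.2 then (n.-1 - i.1)%:R else i.1%:R) / (n%:R * n.-1%:R).

(* Bound on the conditional mean of [|C_j(n) - C_j(n-1)|] given the pair [i] of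
   first pivots, by induction on [n] and the bound [4 n']. *)
Definition coupling_bound (n j : nat) (i : nat * bool) : R :=
  if i.2 then 1 + (if (i.1 < j.-1)%N then 2 + 16 * (j.-1 - i.1)%:R else 0)
  else 1 + (if (j.+1 <= i.1)%N then 2 + 16 * j%:R
            else if i.1 == j then 4 * j%:R
            else if i.1 == j.-1 then 4 * (n - j)%:R
            else 8 * (n.-1 - i.1)%:R).

Definition coupling_cost (n j v : nat) : R :=
  (n.-1 - v)%:R * coupling_bound n j (v, true) + v%:R * coupling_bound n j (v, false).

Lemma sum_coupling_cost n j : (0 < j)%N -> (j < n)%N ->
  \sum_(0 <= v < n) coupling_cost n j v =
  let N := n%:R in let J := j%:R in
  2 * N ^+ 2 + 8 * N ^+ 2 * J + 12 * N * J ^+ 2 - 22 * N * J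
  - 40 / 3 * J ^+ 3 - 2 * J ^+ 2 + 4 / 3 * J.
Proof.
move=> j0 jn.
have NM : (n.-1%:R : R) = n%:R - 1 by rewrite natr_pred //; lia.
have JM : (j.-1%:R : R) = j%:R - 1 by rewrite natr_pred.
have [r1 r2 r3] : [/\ (j.-1 <= j)%N, (j <= j.+1)%N & (j.+1 <= n)%N] by split; lia.
rewrite (big_cat_nat (leq0n j.-1) (leq_trans r1 (leq_trans r2 r3))).
rewrite (big_cat_nat r1 (leq_trans r2 r3)) (big_cat_nat r2 r3) /=.
rewrite (@sum_quadratic _ _ ((n%:R - 1) * (16 * j%:R - 13)) (22 - 16 * j%:R - 8 * n%:R) 8)
  //; last first.
  move=> v /andP [_ vj]; rewrite /coupling_cost /coupling_bound /= vj.
  have -> : (j.+1 <= v)%N = false by lia.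
  have -> : (v == j) = false by apply/eqP; lia.
  have -> : (v == j.-1) = false by apply/eqP; lia.
  by rewrite !natrB ?NM ?JM; [ring | lia | lia].
rewrite (@sum_quadratic _ _ (n%:R - 1) (4 * (n%:R - j%:R)) 0) //; last first.
  move=> v vj; have -> : v = j.-1 by lia.
  rewrite /coupling_cost /coupling_bound /= ltnn eqxx.
  have -> : (j.+1 <= j.-1)%N = false by lia.
  have -> : (j.-1 == j) = false by apply/eqP; lia.
  by rewrite !natrB ?NM ?JM; [ring | lia | lia].
rewrite (@sum_quadratic _ _ (n%:R - 1) (4 * j%:R) 0) //; last first.
  move=> v vj; have -> : v = j by lia.
  rewrite /coupling_cost /coupling_bound /= eqxx.
  have -> : (j < j.-1)%N = false by lia.
  have -> : (j.+1 <= j)%N = false by lia.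
  by rewrite natrB ?NM; [ring | lia].
rewrite (@sum_quadratic _ _ (n%:R - 1) (2 + 16 * j%:R) 0) //; last first.
  move=> v /andP [jv vn]; rewrite /coupling_cost /coupling_bound /= jv.
  have -> : (v < j.-1)%N = false by lia.
  by rewrite natrB ?NM; [ring | lia].
by rewrite /sum_pow0 /sum_pow1 /sum_pow2 JM -addn1 natrD /=; field.
Qed.

Lemma mean_coupling_cost_le n j : (0 < j)%N -> (j < n)%N ->
  \sum_(i <- pivot_pairs n) pair_prob n i * coupling_bound n j i <= 2 + 16 * j%:R.
Proof.
move=> j0 jn.
have n1 : (0 : R) < n%:R * n.-1%:R by rewrite mulr_gt0 // ltr0n; lia.
rewrite big_allpairs (eq_bigr (fun v => coupling_cost n j v / (n%:R * n.-1%:R))); last first.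
  move=> v _; rewrite !big_cons big_nil /= addr0 /pair_prob /coupling_cost.
  by rewrite mulrDl !(mulrAC _ _^-1).
rewrite -mulr_suml (ler_pdivrMr _ _ n1) sum_coupling_cost //=.
rewrite natr_pred; last by lia.
have [t t0 ->] : exists2 t : R, 0 <= t & n%:R = j%:R + 1 + t.
  exists (n%:R - j%:R - 1); last by ring.
  by move: jn; rewrite -(ler_nat R) -addn1 natrD => ?; lra.
have [a a0 ->] : exists2 a : R, 0 <= a & j%:R = a + 1.
  by exists (j%:R - 1); [rewrite subr_ge0 ler1n | ring].
(* In [a = j - 1] and [t = n - j - 1] all coefficients of the difference are nonnegative. *)
have := mulr_ge0 a0 a0; have := mulr_ge0 a0 t0; have := mulr_ge0 t0 t0.
have := mulr_ge0 (mulr_ge0 a0 a0) a0; have := mulr_ge0 (mulr_ge0 a0 a0) t0.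
have := mulr_ge0 (mulr_ge0 a0 t0) t0.
lra.
Qed.

End PivotAverages.
Arguments pivot_cost_bound {R} n m v.
Arguments pair_prob {R} n i.
Arguments coupling_bound {R} n j i.
Arguments mean_pivot_cost_le {R n m}.
Arguments mean_coupling_cost_le {R n j}.

Section PivotEvents.
Variable R : realType.

Lemma lebesgue01_sandwich (S : set R) (lo hi : R) :
  measurable S -> 0 <= lo -> lo <= hi -> hi <= 1 ->
  (forall x, 0 <= x <= 1 -> lo <= x < hi -> S x) ->
  (forall x, 0 <= x <= 1 -> S x -> lo <= x <= hi) ->
  lebesgue_measure (S `&` `[0%R, 1%R]) = (hi - lo)%:E.
Proof.
move=> mS lo0 lohi hi1 inS outS.
have m01 : measurable (S `&` `[0%R, 1%R]) by apply: measurableI.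
apply/le_anti/andP; split.
  apply: (@le_trans _ _ (lebesgue_measure (`[lo, hi] : set R))).
    apply: le_measure; rewrite ?inE //= => x [Sx]; rewrite /= in_itv /= => x01.
    by rewrite in_itv /=; apply: outS.
  by rewrite lebesgue_measure_itv /= lte_fin; case: ifP => // _; rewrite lee_fin subr_ge0.
apply: (@le_trans _ _ (lebesgue_measure (`[lo, hi[ : set R))).
  rewrite lebesgue_measure_itv /= lte_fin; case: ltP => // hilo.
  have -> : hi = lo by apply/le_anti; rewrite hilo lohi.
  by rewrite subrr.
apply: le_measure; rewrite ?inE //= => x; rewrite /= in_itv /= => /andP [lox xhi].
have x01 : 0 <= x <= 1 by rewrite (le_trans lo0 lox) ltW // (lt_le_trans xhi hi1).
by split; [apply: inS; rewrite ?lox | rewrite /= in_itv].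
Qed.

Definition window (la : bool) (a c : R) (hb : bool) (b c' : R) : set R :=
  [set x | (la || (a <= c * x)) && (hb || (c' * x < b))].

Lemma measurable_window la a c hb b c' : measurable (window la a c hb b c').
Proof.
have mW : measurable_fun setT (fun x : R => (la || (a <= c * x)) && (hb || (c' * x < b))).
  apply: measurable_and; apply: measurable_or; try exact: measurable_cst.
    apply: measurable_realfun.measurable_fun_ler; first exact: measurable_cst.
    by apply: measurable_realfun.measurable_funM => //; exact: measurable_cst.
  apply: measurable_realfun.measurable_fun_ltr; last exact: measurable_cst.
  by apply: measurable_realfun.measurable_funM => //; exact: measurable_cst.
have := mW measurableT [set true] I; rewrite setTI.
by congr measurable; apply/seteqP; split => x /=.
Qed.

Lemma lebesgue01_window la a c hb b c' lo hi : 0 < c -> 0 < c' ->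
  lo = (if la then 0 else a / c) -> hi = (if hb then 1 else b / c') ->
  0 <= lo -> lo <= hi -> hi <= 1 ->
  lebesgue_measure (window la a c hb b c' `&` `[0%R, 1%R]) = (hi - lo)%:E.
Proof.
move=> c0 c'0 elo ehi lo0 lohi hi1.
apply: lebesgue01_sandwich => //; first exact: measurable_window.
  move=> x _ /andP [lox xhi]; apply/andP; split.
    by move: lox; rewrite elo; case: la {elo} => //= ?; rewrite mulrC -ler_pdivrMr.
  by move: xhi; rewrite ehi; case: hb {ehi} => //= ?; rewrite mulrC -ltr_pdivlMr.
move=> x /andP [x0 x1] /andP [xlo xhi]; apply/andP; split.
  by move: xlo; rewrite elo; case: la {elo} => //= ?; rewrite ler_pdivrMr // mulrC.
by move: xhi; rewrite ehi; case: hb {ehi} => //= ?; rewrite ltW // ltr_pdivlMr // mulrC.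
Qed.

Lemma pivot_preimage n v : (0 < n)%N -> (v < n)%N ->
  @pivot R n @^-1` [set v] = window (v == 0%N) v%:R n%:R (v == n.-1) v.+1%:R n%:R.
Proof.
move=> n0 vn; have vn1 : (v <= n.-1)%N by rewrite -ltnS prednK.
apply/seteqP; split => x; rewrite /window /=.
  move=> <-; rewrite -leq_pivot ?pivot_le // leqnn /=.
  by case: eqP => //= /eqP Vn; rewrite -pivot_leq // ltn_neqAle Vn pivot_le.
move=> /andP [lo hi]; apply/eqP; rewrite eqn_leq leq_pivot // lo andbT.
move: hi; case: eqP => [->|/eqP vn2] /= hi; first exact: pivot_le.
by rewrite pivot_leq // ltn_neqAle vn2 vn1.
Qed.

Lemma measurable_pivot_preimage n v : (0 < n)%N -> measurable (@pivot R n @^-1` [set v]).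
Proof.
move=> n0; have [vn|nv] := ltnP v n.
  by rewrite pivot_preimage //; exact: measurable_window.
suff -> : @pivot R n @^-1` [set v] = set0 by [].
by apply/seteqP; split => x //= Vx; move: (pivot_lt x n0); rewrite Vx ltnNge nv.
Qed.

Lemma pivot_predn n (x : R) : (2 <= n)%N ->
  (pivot n.-1 x <= pivot n x <= (pivot n.-1 x).+1)%N.
Proof.
move=> n2; have en : (n.-1%:R : R) = n%:R - 1 by rewrite natr_pred // ltnW.
have n2R : (2 : R) <= n%:R by rewrite (ler_nat R 2).
have := pivot_le n x; have := pivot_le n.-1 x.
set a := pivot n x; set b := pivot n.-1 x => bn an.
have a0 : (0 : R) <= a%:R by [].
have b0 : (0 : R) <= b%:R by [].
apply/andP; split; rewrite leqNgt; apply/negP => ab.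
  have := leqnn a; rewrite pivot_leq; last by lia.
  have := ab; rewrite leq_pivot; last by lia.
  by rewrite /= en -!natr1 => ? ?; nra.
have := leqnn b; rewrite pivot_leq; last by lia.
have := ab; rewrite leq_pivot; last by lia.
rewrite /= en -!natr1 => ? ?.
have : ((b.+2)%:R : R) <= n.-1%:R by rewrite ler_nat (leq_trans ab).
by rewrite en -!natr1; nra.
Qed.

Definition pivot_pair n (x : R) : nat * bool := (pivot n x, pivot n.-1 x == pivot n x).

Lemma pivot_pair_preimage_same n v : (2 <= n)%N -> (v <= n.-2)%N ->
  pivot_pair n @^-1` [set (v, true)] = window (v == 0%N) v%:R n.-1%:R false v.+1%:R n%:R.
Proof.
move=> n2 vn; apply/seteqP; split => x; rewrite /= /pivot_pair /window /=.
  case=> av /eqP ba; rewrite -leq_pivot; last by lia.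
  by rewrite -pivot_leq ?ba ?av ?leqnn //; lia.
move=> /andP [lo hi]; rewrite -leq_pivot in lo; last by lia.
rewrite -pivot_leq in hi; last by lia.
have /andP [h1 h2] := pivot_predn x n2.
have e1 : pivot n x = v by apply/eqP; rewrite eqn_leq hi (leq_trans lo h1).
have e2 : pivot n.-1 x = v by apply/eqP; rewrite eqn_leq lo -e1 h1.
by rewrite e1 e2 eqxx.
Qed.

Lemma pivot_pair_preimage_step n v : (2 <= n)%N -> (0 < v)%N -> (v <= n.-1)%N ->
  pivot_pair n @^-1` [set (v, false)] = window false v%:R n%:R (v == n.-1) v%:R n.-1%:R.
Proof.
move=> n2 v0 vn; apply/seteqP; split => x; rewrite /= /pivot_pair /window /=.
  case=> av /eqP ba; have /andP [h1 h2] := pivot_predn x n2.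
  have := leqnn v; rewrite -{2}av leq_pivot // => /orP [/eqP v00|->]; first by lia.
  case: eqP => //= /eqP vn1.
  have : (pivot n.-1 x <= v.-1)%N by lia.
  by rewrite pivot_leq ?prednK //; lia.
move=> /andP [lo hi].
have lo' : (v <= pivot n x)%N by rewrite leq_pivot // lo orbT.
have /andP [h1 h2] := pivot_predn x n2.
have hi' : (pivot n.-1 x < v)%N.
  move: hi; case: eqP => [->|/eqP vn1] /= hi; first by have := pivot_le n.-1 x; lia.
  have : (pivot n.-1 x <= v.-1)%N by rewrite pivot_leq ?prednK //; lia.
  lia.
have e1 : pivot n x = v by lia.
by rewrite e1; congr pair; apply/eqP; lia.
Qed.

Lemma pivot_pair_preimage0 n i : (2 <= n)%N ->
  (if i.2 then (n.-2 < i.1)%N else (i.1 == 0%N) || (n <= i.1)%N) ->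
  pivot_pair n @^-1` [set i] = set0.
Proof.
move=> n2; case: i => v e /= vn; apply/seteqP; split => x //; rewrite /= /pivot_pair.
case=> av ba; have /andP [h1 h2] := pivot_predn x n2.
have := pivot_le n x; have := pivot_le n.-1 x.
by case: e ba vn => [/eqP|/negbT/eqP] ba /= => [|/orP]; lia.
Qed.

Lemma measurable_pivot_pair_preimage n i : (2 <= n)%N ->
  measurable (pivot_pair n @^-1` [set i]).
Proof.
move=> n2; case: i => v [].
  have [vn|vn] := leqP v n.-2; last by rewrite pivot_pair_preimage0.
  by rewrite pivot_pair_preimage_same //; exact: measurable_window.
have [vn|/norP []] := boolP ((v == 0%N) || (n <= v)%N).
  by rewrite pivot_pair_preimage0.
rewrite -lt0n -ltnNge => v0 vn.
by rewrite pivot_pair_preimage_step //; [exact: measurable_window | lia].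
Qed.

Lemma pivot_pairs_uniq n : uniq (pivot_pairs n).
Proof.
apply: allpairs_uniq => //; first exact: iota_uniq.
by move=> [? ?] [? ?] _ _ [-> ->].
Qed.

Lemma pivot_pair_in n x : (0 < n)%N -> pivot_pair n x \in pivot_pairs n.
Proof.
by move=> n0; apply: allpairs_f; rewrite ?mem_index_iota ?pivot_lt //; case: (_ == _).
Qed.

Lemma mem_pivot_pairs n i : i \in pivot_pairs n -> (i.1 < n)%N.
Proof. by move=> /allpairsP [[v e] [+ _ ->]]; rewrite mem_index_iota. Qed.

End PivotEvents.

Section CoupledDifference.
Variable R : realType.
Implicit Types (u : nat -> R).

Definition Cqs_diff_bound u (j n k : nat) (i : nat * bool) : R :=
  let: (v, same) := i in
  if same then 1 + (if (v < j.-1)%N then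
      `|Cqs (j.-1 - v) (n.-1 - v) u k - Cqs (j.-1 - v) (n.-1 - v).-1 u k| else 0)
  else 1 + (if (j.+1 <= v)%N then `|Cqs j v u k - Cqs j v.-1 u k|
            else if v == j then Cqs j j u k
            else if v == j.-1 then Cqs 1 (n - j) u k
            else Cqs (j.-1 - v) (n.-1 - v) u k + Cqs (j - v) (n.-1 - v) u k).

Lemma Cqs_diff_same u j n k : (0 < j)%N -> (j < n)%N ->
  pivot n.-1 (u k) = pivot n (u k) ->
  `|Cqs j n u k - Cqs j n.-1 u k| <= Cqs_diff_bound u j n k.+1 (pivot n (u k), true).
Proof.
move=> j0 jn ba; rewrite [Cqs j n u k]CqsE ?(ltnW jn) // [Cqs j n.-1 u k]CqsE //; last by lia.
rewrite natr_pred; last by lia.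
rewrite ba /=; set a := pivot n (u k); case: ifP => aj; last by rewrite ler_norml; lra.
have -> : (n.-1.-1 - a = (n.-1 - a).-1)%N by lia.
set C1 := Cqs _ (n.-1 - a) u k.+1; set C2 := Cqs _ (n.-1 - a).-1 u k.+1.
have := ler_norm (C1 - C2); have := ler_norm (C2 - C1); rewrite distrC.
by rewrite ler_norml; lra.
Qed.

Lemma Cqs_diff_step u j n k : (0 < j)%N -> (j < n)%N ->
  pivot n.-1 (u k) != pivot n (u k) ->
  `|Cqs j n u k - Cqs j n.-1 u k| <= Cqs_diff_bound u j n k.+1 (pivot n (u k), false).
Proof.
move=> j0 jn nba.
have /andP [ba ab] := pivot_predn (u k) (leq_ltn_trans j0 jn).
rewrite [Cqs j n u k]CqsE ?(ltnW jn) // [Cqs j n.-1 u k]CqsE //; last by lia.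
rewrite natr_pred; last by lia.
set a := pivot n (u k); have -> : pivot n.-1 (u k) = a.-1 by rewrite /a; lia.
have a0 : (0 < a)%N by rewrite /a; lia.
have C0 j' n' : (0 < j')%N -> 0 <= Cqs j' n' u k.+1 by exact: Cqs_ge0.
rewrite /Cqs_diff_bound; have [ja|aj] := leqP j.+1 a.
  have [-> ->] : (a < j.-1)%N = false /\ (a.-1 < j.-1)%N = false by split; lia.
  set C1 := Cqs j a u k.+1; set C2 := Cqs j a.-1 u k.+1.
  have := ler_norm (C1 - C2); have := ler_norm (C2 - C1); rewrite distrC.
  by rewrite ler_norml; lra.
rewrite (@Cqs_lt _ j a.-1); last by lia.
have [->|naj] := eqVneq a j.
  have -> : (j < j.-1)%N = false by lia.
  have -> : (j.-1 < j.-1)%N = false by lia.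
  by have := C0 j j j0; rewrite ler_norml; lra.
rewrite (@Cqs_lt _ j a); last by lia.
have [->|naj1] := eqVneq a j.-1.
  have [-> ->] : (j.-1 < j.-1)%N = false /\ (j.-1.-1 < j.-1)%N by split; lia.
  have [-> ->] : (j.-1 - j.-1.-1 = 1)%N /\ (n.-1.-1 - j.-1.-1 = n - j)%N by split; lia.
  by have := C0 1%N (n - j)%N (ltn0Sn 0); rewrite ler_norml; lra.
have [-> ->] : (a < j.-1)%N /\ (a.-1 < j.-1)%N by split; lia.
have [-> ->] : (j.-1 - a.-1 = j - a)%N /\ (n.-1.-1 - a.-1 = n.-1 - a)%N by split; lia.
have := C0 (j.-1 - a)%N (n.-1 - a)%N ltac:(lia).
have := C0 (j - a)%N (n.-1 - a)%N ltac:(lia).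
by rewrite ler_norml; lra.
Qed.

Lemma Cqs_diff_le u j n k : (0 < j)%N -> (j < n)%N ->
  `|Cqs j n u k - Cqs j n.-1 u k| <= Cqs_diff_bound u j n k.+1 (pivot_pair n (u k)).
Proof.
move=> j0 jn; rewrite /pivot_pair.
by have [ba|nba] := eqVneq (pivot n.-1 (u k)) (pivot n (u k));
  [exact: Cqs_diff_same | exact: Cqs_diff_step].
Qed.

End CoupledDifference.

Section UniformPivots.
Variables (d : measure_display) (T : measurableType d) (R : realType)
  (P : probability T R) (X : {RV P >-> R}).
Hypothesis unifX : uniform01 X.

Lemma uniform01_preimage (S : set R) : measurable S ->
  P (X @^-1` S) = lebesgue_measure (S `&` `[0%R, 1%R]).
Proof.
move=> mS; rewrite -[LHS]/(distribution P X S) unifX // /uniform_prob integral_uniform_pdf.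
rewrite (eq_integral (fun=> 1%:E)) ?integral_cst ?mul1e //; first exact: measurableI.
by move=> x; rewrite inE /= in_itv /= => -[_ x01]; rewrite /uniform_pdf x01 subr0 invr1.
Qed.

Lemma P_pivot n v : (0 < n)%N -> (v < n)%N ->
  P (X @^-1` (pivot n @^-1` [set v])) = ((n%:R : R)^-1)%:E.
Proof.
move=> n0 vn; have n0R : (0 : R) < n%:R by rewrite ltr0n.
rewrite pivot_preimage // uniform01_preimage; last exact: measurable_window.
rewrite (@lebesgue01_window _ _ _ _ _ _ _ (v%:R / n%:R) (v.+1%:R / n%:R)) //.
- by congr EFin; rewrite -mulrBl -natrB // subSnn div1r.
- by case: eqP => // ->; rewrite mul0r.
- by case: eqP => // ->; rewrite prednK // divff // gt_eqF.
- by rewrite ler_pM2r ?invr_gt0 // ler_nat.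
- by rewrite ler_pdivrMr // mul1r ler_nat.
Qed.

Lemma P_pivot_pair n i : (2 <= n)%N -> (i.1 < n)%N ->
  P (X @^-1` (pivot_pair n @^-1` [set i])) = (pair_prob n i)%:E.
Proof.
move=> n2; case: i => v e /= vn.
have n0R : (0 : R) < n%:R by rewrite ltr0n ltnW.
have n1R : (0 : R) < n.-1%:R by rewrite ltr0n; lia.
have en : (n.-1%:R : R) = n%:R - 1 by rewrite natr_pred // ltnW.
rewrite /pair_prob /=; case: e.
  have [vn2|vn2] := leqP v n.-2; last first.
    rewrite pivot_pair_preimage0 // preimage_set0 measure0.
    have -> : (n.-1 - v = 0)%N by lia.
    by rewrite mul0r.
  rewrite pivot_pair_preimage_same // uniform01_preimage; last exact: measurable_window.
  rewrite (@lebesgue01_window _ _ _ _ _ _ _ (v%:R / n.-1%:R) (v.+1%:R / n%:R)) //.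
  - congr EFin; rewrite natrB; last by lia.
    by rewrite en -addn1 natrD; field; rewrite -en !gt_eqF.
  - by case: eqP => // ->; rewrite mul0r.
  - rewrite ler_pdivrMr // mulrAC ler_pdivlMr // en -addn1 natrD.
    have : ((v + 2)%:R : R) <= n%:R by rewrite ler_nat; lia.
    by rewrite natrD => ?; nra.
  - by rewrite ler_pdivrMr // mul1r ler_nat; lia.
have [->|v0] := eqVneq v 0%N.
  by rewrite pivot_pair_preimage0 // preimage_set0 measure0 mul0r.
rewrite pivot_pair_preimage_step ?lt0n //; last by lia.
rewrite uniform01_preimage; last exact: measurable_window.
rewrite (@lebesgue01_window _ _ _ _ _ _ _ (v%:R / n%:R) (v%:R / n.-1%:R)) //.
- by congr EFin; rewrite en; field; rewrite -en !gt_eqF.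
- by case: eqP => // ->; rewrite divff // gt_eqF.
- by rewrite ler_pdivrMr // mulrAC ler_pdivlMr // ler_wpM2l // ler_nat leq_pred.
- by rewrite ler_pdivrMr // mul1r ler_nat; lia.
Qed.

End UniformPivots.

Section ConditionalBounds.
Variables (d : measure_display) (T : measurableType d) (R : realType)
  (P : probability T R) (U : nat -> {RV P >-> R}).
Hypothesis indep : mutually_independent U.

Definition cylinder (I : seq nat) (B : nat -> set R) : set T :=
  \bigcap_(i in [set` I]) (U i @^-1` B i).

Lemma measurable_cylinder I B : (forall i, measurable (B i)) -> measurable (cylinder I B).
Proof. by move=> mB; apply: bigcap_measurableType => i _; exact: measurable_funPTI. Qed.

Lemma cylinder_cons k I B J : all (fun i => (i < k)%N) I ->
  cylinder I B `&` (U k @^-1` J) = cylinder (k :: I) [eta B with k |-> J].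
Proof.
move=> /allP Ik; have Ik' i : i \in I -> (i == k) = false.
  by move/Ik; rewrite ltn_neqAle => /andP [/negbTE].
apply/seteqP; split => w /=.
  move=> [IBw Jw] i /=; rewrite in_cons => /orP [/eqP ->|iI]; first by rewrite eqxx.
  by rewrite Ik' //; apply: IBw.
move=> IBw; split; last by have := IBw k; rewrite /= mem_head eqxx; apply.
by move=> i iI; have := IBw i; rewrite /= in_cons iI orbT Ik' // => /(_ isT).
Qed.

Lemma P_cylinder_cons k I B J : uniq I -> (forall i, measurable (B i)) -> measurable J ->
  all (fun i => (i < k)%N) I ->
  P (cylinder (k :: I) [eta B with k |-> J]) = (P (U k @^-1` J) * P (cylinder I B))%E.
Proof.
move=> uI mB mJ /allP Ik.
have kI : k \notin I by apply/negP => /Ik; rewrite ltnn.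
have mBJ i : measurable ([eta B with k |-> J] i) by rewrite /=; case: eqP.
rewrite /cylinder indep /= ?kI // big_cons /= eqxx indep //; congr (_ * _)%E.
rewrite big_seq [RHS]big_seq; apply: eq_bigr => i /Ik.
by rewrite ltn_neqAle => /andP [/negbTE ->].
Qed.

(* [cond_bounded k c X]: [X >= 0] and [E[X | U_0, ..., U_(k-1)] <= c], expressed without
   conditional expectations as [\int_A X <= c P(A)] for all cylinder events [A] of
   [U_0, ..., U_(k-1)]. *)
Definition cond_bounded k (c : R) (X : T -> R) :=
  [/\ measurable_fun setT X, (forall w, 0 <= X w) &
   forall I B, uniq I -> (forall i, measurable (B i)) -> all (fun i => (i < k)%N) I ->
     (\int[P]_(w in cylinder I B) (X w)%:E <= P (cylinder I B) * c%:E)%E].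

Lemma cond_bounded_cst k (c : R) : 0 <= c -> cond_bounded k c (fun=> c).
Proof.
move=> c0; split => // I B _ mB _.
rewrite integral_cst; [by rewrite muleC | exact: measurable_cylinder].
Qed.

Lemma cond_bounded_le k (c c' : R) X : c <= c' -> cond_bounded k c X -> cond_bounded k c' X.
Proof.
move=> cc' [mX X0 bX]; split => // I B uI mB Ik.
by apply: le_trans (bX I B uI mB Ik) _; rewrite lee_wpmul2l // lee_fin.
Qed.

Lemma cond_bounded_dom k (c : R) (X Y : T -> R) :
  measurable_fun setT X -> (forall w, 0 <= X w) -> (forall w, X w <= Y w) ->
  cond_bounded k c Y -> cond_bounded k c X.
Proof.
move=> mX X0 XY [mY Y0 bY]; split => // I B uI mB Ik.
apply: le_trans (bY I B uI mB Ik); apply: ge0_le_integral => //.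
- exact: measurable_cylinder.
- by move=> w _; rewrite lee_fin.
- by apply/measurable_realfun.measurable_EFinP; apply: measurable_funS mX.
- by apply/measurable_realfun.measurable_EFinP; apply: measurable_funS mY.
- by move=> w _; rewrite lee_fin.
Qed.

Lemma cond_boundedD k (a b : R) (X Y : T -> R) : cond_bounded k a X -> cond_bounded k b Y ->
  cond_bounded k (a + b) (fun w => X w + Y w).
Proof.
move=> [mX X0 bX] [mY Y0 bY]; split; first exact: measurable_realfun.measurable_funD.
  by move=> w; rewrite addr_ge0.
move=> I B uI mB Ik; have mA := measurable_cylinder I mB.
under eq_integral do rewrite EFinD.
rewrite ge0_integralD //.
- rewrite EFinD muleDr ?fin_num_measure //; exact: leeD (bX I B uI mB Ik) (bY I B uI mB Ik).
- by move=> w _; rewrite lee_fin.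
- by apply/measurable_realfun.measurable_EFinP; apply: measurable_funS mX.
- by move=> w _; rewrite lee_fin.
- by apply/measurable_realfun.measurable_EFinP; apply: measurable_funS mY.
Qed.

Lemma cond_bounded_piece k c Y I B J : cond_bounded k.+1 c Y ->
  uniq I -> (forall i, measurable (B i)) -> measurable J -> all (fun i => (i < k)%N) I ->
  (\int[P]_(w in cylinder I B `&` U k @^-1` J) (Y w)%:E
    <= P (U k @^-1` J) * P (cylinder I B) * c%:E)%E.
Proof.
move=> [_ _ bY] uI mB mJ Ik.
have kI : k \notin I by apply/negP => /(allP Ik); rewrite ltnn.
have mBJ i : measurable ([eta B with k |-> J] i) by rewrite /=; case: eqP.
rewrite cylinder_cons // -P_cylinder_cons //; apply: bY => //=; first by rewrite kI.
by rewrite ltnSn; apply: sub_all Ik => i /ltnW.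
Qed.

Lemma cond_bounded_split (I0 : choiceType) (s : seq I0) (g : R -> I0) k (X : T -> R)
    (Xi : I0 -> T -> R) (p b : I0 -> R) :
  uniq s -> (forall x, g x \in s) -> (forall i, measurable (g @^-1` [set i])) ->
  (forall i, i \in s -> P (U k @^-1` (g @^-1` [set i])) = (p i)%:E) ->
  measurable_fun setT X -> (forall w, 0 <= X w) ->
  (forall w, X w <= Xi (g (U k w)) w) ->
  (forall i, i \in s -> cond_bounded k.+1 (b i) (Xi i)) ->
  cond_bounded k (\sum_(i <- s) p i * b i) X.
Proof.
move=> us gs mg Pg mX X0 XXi bXi; split => // I B uI mB Ik.
set A := cylinder I B; have mA : measurable A by exact: measurable_cylinder.
pose F i := A `&` U k @^-1` (g @^-1` [set i]).
have mF i : measurable (F i) by apply: measurableI => //; exact: measurable_funPTI.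
have AF : A = \big[setU/set0]_(i <- s) F i.
  rewrite -bigcup_seq; apply/seteqP; split => [w Aw|w [i _ []] //].
  by exists (g (U k w)); [exact: gs | split].
have tF : trivIset [set` s] F.
  apply/trivIsetP => i j _ _ ij; apply/seteqP; split => // w [[_ gi] [_ gj]].
  by move/eqP: ij; apply; rewrite -gi -gj.
rewrite [X in (\int[P]_(w in X) _)%E]AF ge0_integral_bigsetU //; first last.
- by move=> w _; rewrite lee_fin.
- by apply/measurable_realfun.measurable_EFinP; apply: measurable_funS mX.
rewrite -(fineK (fin_num_measure _ _ mA)) -EFinM mulr_sumr -sumEFin.
rewrite big_seq [X in (_ <= X)%E]big_seq.
apply: lee_sum => i si; have [mXi Xi0 _] := bXi i si.
apply: (@le_trans _ _ (\int[P]_(w in F i) (Xi i w)%:E)%E).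
  apply: ge0_le_integral => //.
  - by move=> w _; rewrite lee_fin.
  - by apply/measurable_realfun.measurable_EFinP; apply: measurable_funS mX.
  - by apply/measurable_realfun.measurable_EFinP; apply: measurable_funS mXi.
  - by move=> w [_ /= <-]; rewrite lee_fin.
apply: le_trans (cond_bounded_piece (bXi i si) uI mB (mg i) Ik) _.
rewrite Pg // -/A; set a := fine (P A).
by rewrite -(fineK (fin_num_measure _ _ mA)) -/a -!EFinM lee_fin [X in _ <= X]mulrCA mulrA.
Qed.

Lemma measurable_fun_piecewise (I0 : choiceType) (s : seq I0) (g : R -> I0) k
    (X : T -> R) (Xi : I0 -> T -> R) :
  (forall x, g x \in s) -> (forall i, measurable (g @^-1` [set i])) ->
  (forall w, X w = Xi (g (U k w)) w) ->
  (forall i, i \in s -> measurable_fun setT (Xi i)) ->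
  measurable_fun setT X.
Proof.
move=> gs mg XE mXi _ Y mY; rewrite setTI.
have -> : X @^-1` Y = \big[setU/set0]_(i <- s) (U k @^-1` (g @^-1` [set i]) `&` Xi i @^-1` Y).
  rewrite -bigcup_seq; apply/seteqP; split => w /=.
    by move=> Yw; exists (g (U k w)); [exact: gs | rewrite /= -XE].
  by move=> [i _ [/= gi Yi]]; rewrite XE gi.
rewrite big_seq; apply: bigsetU_measurable => i si.
apply: measurableI; first exact: measurable_funPTI.
by have := mXi i si measurableT Y mY; rewrite setTI.
Qed.

End ConditionalBounds.

Section QuickselectBounds.
Variables (d : measure_display) (T : measurableType d) (R : realType)
  (P : probability T R) (U : nat -> {RV P >-> R}).
Hypotheses (indep : mutually_independent U) (unif : forall i, uniform01 (U i)).

Definition Crv m n k (w : T) : R := Cqs m n (fun i => U i w) k.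

Lemma cond_bounded_Crv m n k : (0 < m)%N -> cond_bounded U k (4 * n%:R) (Crv m n k).
Proof.
elim/ltn_ind: n m k => n IH m k m0.
have [nm|mn] := ltnP n m.
  have -> : Crv m n k = fun=> 0 by apply/funext => w; rewrite /Crv Cqs_lt.
  by apply: cond_bounded_le (cond_bounded_cst _ _ (lexx 0)); rewrite mulr_ge0.
have n0 := leq_trans m0 mn.
pose Xi v w := (n%:R - 1) + (if (m <= v)%N then Crv m v k.+1 w else 0)
  + (if (v < m.-1)%N then Crv (m.-1 - v) (n.-1 - v) k.+1 w else 0).
have XE w : Crv m n k w = Xi (pivot n (U k w)) w.
  rewrite /Crv CqsE // /Xi; have [//|Vm] := leqP m (pivot n (U k w)).
  by rewrite Cqs_lt.
have bXi v : v \in index_iota 0 n -> cond_bounded U k.+1 (pivot_cost_bound n m v) (Xi v).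
  rewrite mem_index_iota => /andP [_ vn].
  apply: cond_boundedD; first apply: cond_boundedD.
  - by apply: cond_bounded_cst; rewrite subr_ge0 ler1n.
  - by case: ifP => _; [exact: IH | exact: cond_bounded_cst].
  case: ifP => vm; last exact: cond_bounded_cst.
  have -> : 4 * (n%:R - 1 - v%:R) = 4 * (n.-1 - v)%:R :> R.
    by rewrite natrB ?natr_pred //; lia.
  by apply: IH; lia.
have gs (x : R) : pivot n x \in index_iota 0 n by rewrite mem_index_iota pivot_lt.
have mX : measurable_fun setT (Crv m n k).
  apply: (measurable_fun_piecewise gs _ XE) => [v|v /bXi []//].
  exact: measurable_pivot_preimage.
apply: cond_bounded_le (mean_pivot_cost_le m0 mn) _.
apply: (cond_bounded_split indep (iota_uniq _ _) gs) => //; last exact: bXi.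
- by move=> v; exact: measurable_pivot_preimage.
- by move=> v; rewrite mem_index_iota => /andP [_ vn]; exact: P_pivot.
- by move=> w; exact: Cqs_ge0.
- by move=> w; rewrite XE.
Qed.

Definition Cdiff j n k (w : T) : R := `|Crv j n k w - Crv j n.-1 k w|.

Lemma measurable_Cdiff j n k : (0 < j)%N -> measurable_fun setT (Cdiff j n k).
Proof.
move=> j0; apply: measurableT_comp; first exact: measurable_realfun.normr_measurable.
by apply: measurable_realfun.measurable_funB; [case: (cond_bounded_Crv n k j0)
  | case: (cond_bounded_Crv n.-1 k j0)].
Qed.

Lemma cond_bounded_Cdiff_piece j n k i : (0 < j)%N -> (j < n)%N -> (i.1 < n)%N ->
  (forall j' n', (0 < j')%N -> (0 < n')%N -> (n' < n)%N ->
     cond_bounded U k (2 + 16 * j'%:R) (Cdiff j' n' k)) ->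
  cond_bounded U k (coupling_bound n j i) (fun w => Cqs_diff_bound (fun i => U i w) j n k i).
Proof.
case: i => v [] j0 jn /= vn IH; rewrite /coupling_bound /Cqs_diff_bound /=;
  apply: cond_boundedD (cond_bounded_cst _ _ ler01) _.
  case: ifP => vj; last exact: cond_bounded_cst.
  by apply: IH; lia.
case: ifP => jv; first by apply: IH; lia.
case: eqP => [_|vj]; first exact: cond_bounded_Crv.
case: eqP => [_|vj1]; first exact: cond_bounded_Crv.
apply: (cond_bounded_le (c := 4 * (n.-1 - v)%:R + 4 * (n.-1 - v)%:R)).
  by rewrite -mulrDl; lra.
by apply: cond_boundedD; apply: cond_bounded_Crv; lia.
Qed.

Lemma cond_bounded_Cdiff j n k : (0 < j)%N -> (0 < n)%N ->
  cond_bounded U k (2 + 16 * j%:R) (Cdiff j n k).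
Proof.
elim/ltn_ind: n j k => n IH j k j0 n0.
have [nj|jn] := ltnP n j.
  have -> : Cdiff j n k = fun=> 0.
    by apply/funext => w; rewrite /Cdiff /Crv Cqs_lt // Cqs_lt ?subrr ?normr0 //; lia.
  by apply: cond_bounded_le (cond_bounded_cst _ _ (lexx 0)); rewrite addr_ge0 // mulr_ge0.
have [en|] := eqVneq n j.
  apply: (cond_bounded_dom (measurable_Cdiff n k j0)) => [w | w |]; first exact: normr_ge0.
    rewrite /Cdiff [Crv j n.-1 k w]Cqs_lt ?subr0 ?ger0_norm ?Cqs_ge0 //; lia.
  apply: cond_bounded_le (cond_bounded_Crv n k j0).
  by rewrite en; have := ler0n R j; lra.
move=> nej; have {jn nej} jn : (j < n)%N by rewrite ltn_neqAle eq_sym nej.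
have n2 : (2 <= n)%N by apply: leq_ltn_trans jn.
apply: cond_bounded_le (mean_coupling_cost_le j0 jn) _.
apply: (cond_bounded_split indep (pivot_pairs_uniq n) (fun x => pivot_pair_in x n0)
  (Xi := fun i w => Cqs_diff_bound (fun i => U i w) j n k.+1 i)).
- by move=> i; exact: measurable_pivot_pair_preimage.
- by move=> i si; apply: (P_pivot_pair (unif k) n2); exact: mem_pivot_pairs si.
- exact: measurable_Cdiff n k j0.
- by move=> w; exact: normr_ge0.
- by move=> w; exact: Cqs_diff_le.
move=> i si; apply: cond_bounded_Cdiff_piece => // [|j' n' j'0 n'0 n'n].
  exact: mem_pivot_pairs.
exact: IH.
Qed.

End QuickselectBounds.

Theorem lemma2p6 (d : measure_display) (T : measurableType d) (R : realType)
  (P : probability T R) (U : nat -> {RV P >-> R}) :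
  mutually_independent U -> (forall i, uniform01 (U i)) ->
  forall m p : nat, (2 <= m)%N -> (1 <= p)%N ->
  (\int[P]_w `|Cqs m p (fun i => U i w) 0 - Cqs m p.-1 (fun i => U i w) 0|%:E
     <= (2 + 16 * m%:R)%:E)%E.
Proof.
move=> indep unif m p m2 p1.
have [_ _ /(_ [::] (fun=> setT))] := cond_bounded_Cdiff indep unif 0 (ltnW m2) p1.
have -> : cylinder U [::] (fun=> setT) = setT by apply/seteqP; split.
by rewrite probability_setT mul1e; apply.
Qed.
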